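(* Let $S$ be a solid and let $x,y,z\in S$. If $y$ and $z$ are of the same sign (both positive or both negative), then $x(y+z)=xy+xz$.
   Context: A solid is a set $S$ with two binary operations $+$ and $\cdot$ (written $xy$) and a binary relation $\le$ satisfying the following axioms (all variables range over $S$). (A1) $+$ is associative and commutative. (A2) For each $x$ there is $e$ with $x+e=x$ such that $e+f=e$ for every $f$ with $x+f=x$; this $e$ is unique and is denoted $e(x)$ (the magnitude of $x$). An element $x$ with $x=e(x)$ is called a magnitude. (A3) For each $x$ there is $s$ with $x+s=e(x)$ and $e(s)=e(x)$; it is unique and denoted $-x$; write $x-y$ for $x+(-y)$. (A4) $e(x+y)=e(x)$ or $e(x+y)=e(y)$. (M1) $\cdot$ is associative and commutative. (M2) For each $x\neq e(x)$ there is $u$ with $xu=x$ such that $uv=u$ for every $v$ with $xv=x$; it is unique and denoted $u(x)$. (M3) For each $x\ne e(x)$ there is $d$ with $xd=u(x)$ and $u(d)=u(x)$; it is unique and denoted $x^{-1}$; write $y/x$ for $yx^{-1}$. (M4) If $x\neq e(x)$ and $y\ne e(y)$ then $u(xy)=u(x)$ or $u(xy)=u(y)$. (O1) $\le$ is a total order (reflexive, antisymmetric, transitive, total); $x<y$ means $x\le y$ and $x\ne y$. (O2) $x\le y\Rightarrow x+z\le y+z$. (O3) $y+e(x)=e(x)\Rightarrow (y\le e(x)$ and $-y\le e(x))$. (O4) $(e(x)<x$ and $y\le z)\Rightarrow xy\le xz$. (O5) $e(y)\le y\le z\Rightarrow e(x)y\le e(x)z$. (AM1) For all $x,y$ there is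 $z$ with $e(x)y=e(z)$. (AM2) $e(xy)=e(x)y+e(y)x$. (AM3) If $x\ne e(x)$ then $e(u(x))=e(x)/x$. (AM4) (distributivity axiom) $xy+xz=x(y+z)+e(x)y+e(x)z$. (AM5) $-(xy)=(-x)y$. (E1) There is $m$ with $m+x=x$ for all $x$; it is unique, called zero and denoted $0$. (E2) There is $u$ with $ux=x$ for all $x$; it is unique, called one and denoted $1$. (E3) There is $M$ with $e(x)+M=M$ for all $x$. (E4) There is $x$ with $e(x)\ne 0$ and $e(x)\ne M$. (E5) For every $x$ there is $a$ with $x=a+e(x)$ and $e(a)=0$. (E6) If $x,y$ are magnitudes with $x<y$, there is $z$ with $z\ne e(z)$ and $x<z<y$. Further notation: $S^*=\{x\in S: x\ne e(x)\}$ (zeroless elements). $x$ is positive if $e(x)\le x$ and negative if $x<e(x)$; $|x|=x$ if $x$ is positive and $|x|=-x$ if $x$ is negative. $x$ is precise if $e(x)=0$. The relative uncertainty $R(x)$ is $e(u(x))$ if $x\ne e(x)$, and $M$ (from (E3)) if $x=e(x)$. *)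

Set Implicit Arguments.

(* The derived operations e(x), -x, u(x), x^{-1} (which the paper obtains from
   the existence parts of (A2),(A3),(M2),(M3)) are carried as fields together
   with their characterizing properties; u and inv are only constrained on
   zeroless elements x <> e x. *)
Record solid := Solid {
  S :> Type;
  add : S -> S -> S;
  mul : S -> S -> S;
  le : S -> S -> Prop;
  e : S -> S;
  opp : S -> S;
  u : S -> S;
  inv : S -> S;
  zero : S;
  bigM : S;
  addA : forall x y z, add x (add y z) = add (add x y) z;
  addC : forall x y, add x y = add y x;
  A2_e : forall x, add x (e x) = x;
  A2_min : forall x f, add x f = x -> add (e x) f = e x;
  A2_uniq : forall x e', add x e' = x -> (forall f, add x f = x -> add e' f = e') -> e' = e x;
  A3_opp : forall x, add x (opp x) = e x /\ e (opp x) = e x;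
  A3_uniq : forall x s, add x s = e x -> e s = e x -> s = opp x;
  A4 : forall x y, e (add x y) = e x \/ e (add x y) = e y;
  mulA : forall x y z, mul x (mul y z) = mul (mul x y) z;
  mulC : forall x y, mul x y = mul y x;
  M2_u : forall x, x <> e x -> mul x (u x) = x;
  M2_min : forall x v, x <> e x -> mul x v = x -> mul (u x) v = u x;
  M2_uniq : forall x u', x <> e x -> mul x u' = x ->
             (forall v, mul x v = x -> mul u' v = u') -> u' = u x;
  M3_inv : forall x, x <> e x -> mul x (inv x) = u x /\ u (inv x) = u x;
  M3_uniq : forall x d, x <> e x -> mul x d = u x -> u d = u x -> d = inv x;
  M4 : forall x y, x <> e x -> y <> e y -> u (mul x y) = u x \/ u (mul x y) = u y;
  le_refl : forall x, le x x;
  le_antisym : forall x y, le x y -> le y x -> x = y;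
  le_trans : forall x y z, le x y -> le y z -> le x z;
  le_total : forall x y, le x y \/ le y x;
  O2 : forall x y z, le x y -> le (add x z) (add y z);
  O3 : forall x y, add y (e x) = e x -> le y (e x) /\ le (opp y) (e x);
  O4 : forall x y z, (le (e x) x /\ e x <> x) -> le y z -> le (mul x y) (mul x z);
  O5 : forall x y z, le (e y) y -> le y z -> le (mul (e x) y) (mul (e x) z);
  AM1 : forall x y, exists z, mul (e x) y = e z;
  AM2 : forall x y, e (mul x y) = add (mul (e x) y) (mul (e y) x);
  AM3 : forall x, x <> e x -> e (u x) = mul (e x) (inv x);
  AM4 : forall x y z, add (mul x y) (mul x z) =
        add (add (mul x (add y z)) (mul (e x) y)) (mul (e x) z);
  AM5 : forall x y, opp (mul x y) = mul (opp x) y;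
  E1 : forall x, add zero x = x;
  E2 : exists one, forall x, mul one x = x;
  E3 : forall x, add (e x) bigM = bigM;
  E4 : exists x, e x <> zero /\ e x <> bigM;
  E5 : forall x, exists a, x = add a (e x) /\ e a = zero;
  E6 : forall x y, x = e x -> y = e y -> (le x y /\ x <> y) ->
       exists z, z <> e z /\ (le x z /\ x <> z) /\ (le z y /\ z <> y)
}.

Arguments add {s0}.
Arguments mul {s0}.
Arguments le {s0}.
Arguments e {s0}.
Arguments opp {s0}.
Arguments u {s0}.
Arguments inv {s0}.
Arguments zero {s0}.
Arguments bigM {s0}.

Definition lt {T : solid} (x y : T) : Prop := le x y /\ x <> y.
Definition positive {T : solid} (x : T) : Prop := le (e x) x.
Definition negative {T : solid} (x : T) : Prop := lt x (e x).

(* By (AM4), [xy + xz = x(y+z) + e(x)y + e(x)z], so it suffices that [e(x)y + e(x)z] is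
   absorbed by [e(x(y+z)) = e(x)(y+z) + e(y+z)x] (AM2).  Products [e(x)w] are magnitudes,
   and magnitudes add like a maximum, so [e(x)y] is absorbed by [e(x)(y+z)] as soon as
   [e(x)y <= e(x)(y+z)]; for positive [y], [z] this follows from [y <= y+z] by (O5), and
   the negative case reduces to it because [e(x)(-w) = e(x)w]. *)
From Stdlib Require Import Setoid.

Arguments addA {s0}.
Arguments addC {s0}.
Arguments A2_e {s0}.
Arguments A2_min {s0}.
Arguments A2_uniq {s0}.
Arguments A3_opp {s0}.
Arguments A3_uniq {s0}.
Arguments A4 {s0}.
Arguments mulC {s0}.
Arguments le_refl {s0}.
Arguments le_antisym {s0}.
Arguments le_trans {s0}.
Arguments le_total {s0}.
Arguments O2 {s0}.
Arguments O3 {s0}.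
Arguments O5 {s0}.
Arguments AM1 {s0}.
Arguments AM2 {s0}.
Arguments AM4 {s0}.
Arguments AM5 {s0}.
Arguments E5 {s0}.

Section SolidArithmetic.
Variable T : solid.
Implicit Types p q w x y z : T.

Lemma e_idem x : e (e x) = e x.
Proof.
  symmetry; apply (A2_uniq (e x) (e x)).
  - apply A2_min, A2_e.
  - intros f Hf; exact Hf.
Qed.

Lemma add_idem_magnitude p : add p p = p -> e p = p.
Proof. intro H; symmetry; apply (A2_uniq p p H); intros f Hf; exact Hf. Qed.

Lemma magnitude_add_idem p : e p = p -> add p p = p.
Proof. intro Hp; rewrite <- Hp at 2; apply A2_e. Qed.

Lemma magnitude_add p q : e p = p -> e q = q -> e (add p q) = add p q.
Proof.
  intros Hp Hq; apply add_idem_magnitude.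
  rewrite <- addA, (addA q p q), (addC q p), <- (addA p q q).
  rewrite (magnitude_add_idem q Hq), addA, (magnitude_add_idem p Hp).
  reflexivity.
Qed.

Lemma magnitude_opp p : e p = p -> opp p = p.
Proof.
  intro Hp; symmetry; apply A3_uniq; [|reflexivity].
  rewrite (magnitude_add_idem p Hp); symmetry; exact Hp.
Qed.

Lemma magnitude_add_le p q : e p = p -> e q = q -> le p q -> add p q = q.
Proof.
  intros Hp Hq Hpq.
  destruct (A4 p q) as [E|E]; rewrite (magnitude_add p q Hp Hq) in E.
  - rewrite Hp in E.
    assert (Hqp : le q p).
    { destruct (O3 p q) as [H _]; [rewrite Hp, addC; exact E|].
      rewrite Hp in H; exact H. }
    rewrite (le_antisym p q Hpq Hqp) in E |- *; exact E.
  - rewrite Hq in E; exact E.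
Qed.

Lemma magnitude_le_add p q : e p = p -> e q = q -> le p (add p q).
Proof.
  intros Hp Hq; destruct (le_total p q) as [H|H].
  - rewrite (magnitude_add_le p q Hp Hq H); exact H.
  - rewrite addC, (magnitude_add_le q p Hq Hp H); apply le_refl.
Qed.

(* Write [y = a + e(y)] with [a] precise (E5) and add [a] to [e(y) <= e(y) + e(z)]. *)
Lemma le_add_e y z : le y (add y (e z)).
Proof.
  destruct (E5 y) as [a [Ha _]].
  pose proof (O2 _ _ a (magnitude_le_add (e y) (e z) (e_idem y) (e_idem z))) as H.
  rewrite (addC (e y) a), <- Ha, (addC (add (e y) (e z)) a), addA, <- Ha in H.
  exact H.
Qed.

Lemma le_add_positive y z : positive z -> le y (add y z).
Proof.
  intro Hz; apply le_trans with (add y (e z)); [apply le_add_e|].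
  pose proof (O2 _ _ y Hz) as H; rewrite (addC (e z) y), (addC z y) in H; exact H.
Qed.

Lemma e_add y z : e (add y z) = add (e y) (e z).
Proof.
  apply le_antisym.
  - destruct (A4 y z) as [E|E]; rewrite E;
      [|rewrite addC]; apply magnitude_le_add; apply e_idem.
  - assert (H : add (add y z) (add (e y) (e z)) = add y z).
    { rewrite addA, <- (addA y z (e y)), (addC z (e y)), (addA y (e y) z), A2_e.
      rewrite <- addA, A2_e; reflexivity. }
    destruct (O3 (add y z) (add (e y) (e z))) as [H' _]; [|exact H'].
    rewrite addC; exact (A2_min _ _ H).
Qed.

Lemma e_opp y : e (opp y) = e y.
Proof. exact (proj2 (A3_opp y)). Qed.

Lemma opp_add y z : opp (add y z) = add (opp y) (opp z).
Proof.
  symmetry; apply A3_uniq.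
  - rewrite e_add, addA, <- (addA y z (opp y)), (addC z (opp y)), (addA y (opp y) z).
    rewrite (proj1 (A3_opp y)), <- addA, (proj1 (A3_opp z)); reflexivity.
  - rewrite !e_add, !e_opp; reflexivity.
Qed.

Lemma negative_opp_positive y : negative y -> positive (opp y).
Proof.
  intros [H _]; unfold positive.
  pose proof (O2 _ _ (opp y) H) as H'.
  destruct (A3_opp y) as [Hy He].
  rewrite Hy, <- He, addC, A2_e in H'; exact H'.
Qed.

Lemma mul_e_magnitude x y : e (mul (e x) y) = mul (e x) y.
Proof. destruct (AM1 x y) as [w Hw]; rewrite Hw; apply e_idem. Qed.

Lemma mul_e_opp x y : mul (e x) (opp y) = mul (e x) y.
Proof. rewrite mulC, <- AM5, mulC; apply magnitude_opp, mul_e_magnitude. Qed.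

Lemma mul_e_add_absorb_positive x y z : positive y -> positive z ->
  add (mul (e x) y) (mul (e x) (add y z)) = mul (e x) (add y z).
Proof.
  intros Hy Hz; apply magnitude_add_le; try apply mul_e_magnitude.
  apply O5; [exact Hy | apply le_add_positive; exact Hz].
Qed.

Lemma mul_e_add_absorb x y z :
  (positive y /\ positive z) \/ (negative y /\ negative z) ->
  add (mul (e x) y) (mul (e x) (add y z)) = mul (e x) (add y z).
Proof.
  intros [[Hy Hz]|[Hy Hz]]; [exact (mul_e_add_absorb_positive x y z Hy Hz)|].
  pose proof (mul_e_add_absorb_positive x (opp y) (opp z)
                (negative_opp_positive y Hy) (negative_opp_positive z Hz)) as H.
  rewrite <- opp_add, !mul_e_opp in H; exact H.
Qed.

Lemma add_absorb2 p q r s : add p r = r -> add q r = r ->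
  add (add r s) (add p q) = add r s.
Proof.
  intros Hp Hq.
  rewrite addC, <- (addA p q), (addA q r s), Hq, (addA p r s), Hp; reflexivity.
Qed.

Lemma add_absorbed_by_e w q : add (e w) q = e w -> add w q = w.
Proof. intro H; rewrite <- (A2_e w) at 1; rewrite <- addA, H; apply A2_e. Qed.

End SolidArithmetic.

Theorem mainTheorem4 (T : solid) (x y z : T) :
  (positive y /\ positive z) \/ (negative y /\ negative z) ->
  mul x (add y z) = add (mul x y) (mul x z).
Proof.
  intro Hsign.
  assert (Hsign' : (positive z /\ positive y) \/ (negative z /\ negative y)) by tauto.
  pose proof (mul_e_add_absorb T x y z Hsign) as Hy.
  pose proof (mul_e_add_absorb T x z y Hsign') as Hz.
  rewrite (addC z y) in Hz.
  rewrite AM4, <- addA; symmetry; apply add_absorbed_by_e.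
  rewrite AM2; apply add_absorb2; assumption.
Qed.
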